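(* Let $(M,d)$ be a pointed metric space. The space $\mathrm{Lip}_0(M)$ has the $w^*$-D2P if and only if $M$ has the Lip-LTP.
   Context: $M$ has base point $0$; $\mathrm{Lip}_0(M)$ is the real Banach space of Lipschitz $f\colon M\to\mathbb R$ with $f(0)=0$, normed by the best Lipschitz constant, with unit ball $B_{\mathrm{Lip}_0(M)}$. $\mathrm{Lip}_0(M)$ is the dual of the Lipschitz-free space $\mathcal F(M)$, the norm-closed linear span of the evaluations $\delta_x$ ($x\in M$) in $\mathrm{Lip}_0(M)^*$; the weak-star topology on $\mathrm{Lip}_0(M)$ is the one induced by $\mathcal F(M)$. $\mathrm{Lip}_0(M)$ has the $w^*$-D2P if every nonempty relatively weak-star open subset of $B_{\mathrm{Lip}_0(M)}$ has diameter $2$. $M$ has the Lip-LTP if for every finite $N\subseteq M$, every $\varepsilon>0$ and every $f\in B_{\mathrm{Lip}_0(M)}$ there exist $u,v\in M$ with $u\ne v$ such that for all $x,y\in N$, $(1-\varepsilon)(|f(x)-f(y)|+d(u,v))\le d(x,u)+d(y,v)$. *)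

From HB Require Import structures.
From mathcomp Require Import all_boot all_order all_algebra.
From mathcomp Require Import boolp classical_sets cardinality reals.
Set Implicit Arguments. Unset Strict Implicit. Unset Printing Implicit Defensive.
Import Order.TTheory GRing.Theory Num.Theory.
Local Open Scope ring_scope.
Local Open Scope classical_set_scope.

Section LipFree.
Variables (R : realType) (T : Type) (d : T -> T -> R) (x0 : T).

Definition is_metric :=
  (forall x y, d x y = 0 <-> x = y) /\
  (forall x y, d x y = d y x) /\
  (forall x y z, d x z <= d x y + d y z).

Definition lipschitz_with (L : R) (f : T -> R) :=
  forall x y, `|f x - f y| <= L * d x y.

Definition Lip0 (f : T -> R) := (exists L, lipschitz_with L f) /\ f x0 = 0.

Definition lipnorm (f : T -> R) : R :=
  sup [set r | exists x y, x <> y /\ r = `|f x - f y| / d x y].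

Definition lip_ball (f : T -> R) := f x0 = 0 /\ lipschitz_with 1 f.

(* evaluation of the finitely supported molecule sum_i a_i delta_{x_i} *)
Definition molecule_eval (c : seq (R * T)) (f : T -> R) : R :=
  \sum_(p <- c) p.1 * f p.2.

(* phi (a functional on Lip_0(M)) belongs to F(M), the norm closure in
   Lip_0(M)^* of span{delta_x}: it is a dual-norm limit of molecules. *)
Definition in_free (phi : (T -> R) -> R) :=
  forall eps : R, 0 < eps -> exists c : seq (R * T),
    forall (L : R) (f : T -> R), 0 <= L -> lipschitz_with L f -> f x0 = 0 ->
      `|phi f - molecule_eval c f| <= eps * L.

(* V is a relatively weak-star (sigma(Lip_0, F(M))) open subset of the ball *)
Definition wstar_rel_open (V : set (T -> R)) :=
  V `<=` lip_ball /\
  forall f, V f -> exists (n : nat) (phi : 'I_n -> ((T -> R) -> R)) (eps : R),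
    0 < eps /\ (forall i, in_free (phi i)) /\
    forall g, lip_ball g -> (forall i, `|phi i g - phi i f| < eps) -> V g.

Definition lip_diam (V : set (T -> R)) : R :=
  sup [set r | exists f g, V f /\ V g /\ r = lipnorm (f \- g)].

Definition wstar_D2P :=
  forall V, wstar_rel_open V -> V !=set0 -> lip_diam V = 2.

Definition Lip_LTP :=
  forall (N : set T) (eps : R) (f : T -> R),
    finite_set N -> 0 < eps -> lip_ball f ->
    exists u v, u <> v /\
      forall x y, N x -> N y ->
        (1 - eps) * (`|f x - f y| + d u v) <= d x u + d y v.

End LipFree.

From mathcomp Require Import all_boot all_order all_algebra.
From mathcomp Require Import boolp classical_sets cardinality reals.
From mathcomp Require Import ring lra.
Import Order.TTheory GRing.Theory Num.Theory.
Local Open Scope classical_set_scope.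
Local Open Scope ring_scope.
Set Implicit Arguments. Unset Strict Implicit.

(* If M has the Lip-LTP, a relatively w*-open neighbourhood of f in the unit
   ball contains every 1-Lipschitz g agreeing with (1 - e) f on a finite set N
   (the supports of molecules approximating its defining functionals).  The
   LTP provides u <> v such that (1 - e) f extends from N to N ∪ {u, v} with
   slope +(1 - e) or -(1 - e) between u and v (McShane extensions), giving
   two such functions at distance at least 2 (1 - e).
   Conversely, {g | |g - f| < delta on N} is w*-open, so the w*-D2P yields g, h
   in it and u <> v with (g - h) u - (g - h) v close to 2 d u v.  If d u v is
   large compared with delta, the 1-Lipschitz bounds on g and h through u and
   v give the LTP inequality; if it is small compared with the separation of
   N, the triangle inequality does. *)

Lemma seq_pos_lb (R : realDomainType) (l : seq R) :
  {in l, forall r, 0 < r} -> exists2 m, 0 < m & {in l, forall r, m <= r}.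
Proof.
elim: l => [|a l IH] l_gt0; first by exists 1.
have [r rl|m m_gt0 m_le] := IH; first by rewrite l_gt0 // inE rl orbT.
exists (Num.min a m); first by rewrite lt_min m_gt0 l_gt0 ?mem_head.
move=> r; rewrite inE => /predU1P [->|rl]; first by rewrite ge_min lexx.
by rewrite ge_min m_le ?orbT.
Qed.

Lemma ge0_ge_sup (R : realType) (A : set R) (x : R) :
  0 <= x -> ubound A x -> sup A <= x.
Proof.
move=> x_ge0 Ax; have [A0|/set0P A_neq0] := eqVneq A set0; last exact: ge_sup.
by rewrite A0 sup0.
Qed.

Section Metric.
Variables (R : realType) (T : choiceType) (d : T -> T -> R).
Hypothesis d_metric : is_metric d.

Lemma d_refl x : d x x = 0.
Proof. by case: d_metric => d0 _; apply/d0. Qed.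

Lemma d_sym x y : d x y = d y x.
Proof. by case: d_metric => _ []. Qed.

Lemma d_tri x y z : d x z <= d x y + d y z.
Proof. by case: d_metric => _ []. Qed.

Lemma d_ge0 x y : 0 <= d x y.
Proof. by have := d_tri x y x; rewrite d_refl (d_sym y x); lra. Qed.

Lemma d_gt0 x y : x <> y -> 0 < d x y.
Proof.
move=> xy; rewrite lt_def d_ge0 andbT; apply/eqP => dxy.
by apply: xy; case: d_metric => d0 _; apply/d0.
Qed.

Lemma finite_separation (s : seq T) :
  exists2 m, 0 < m & {in s &, forall x y, x != y -> m <= d x y}.
Proof.
pose l := [seq d p.1 p.2 | p <- [seq (x, y) | x <- s, y <- s] & p.1 != p.2].
have [|m m_gt0 m_le] := seq_pos_lb (l := l).
  move=> r /mapP [[x y]]; rewrite mem_filter /= => /andP [xy _] ->.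
  by apply: d_gt0 => exy; rewrite exy eqxx in xy.
exists m => // x y xs ys xy; apply/m_le/mapP; exists (x, y) => //.
by rewrite mem_filter xy allpairs_f.
Qed.

Lemma lip1P (g : T -> R) :
  lipschitz_with d 1 g <-> forall x y, g x <= g y + d x y.
Proof.
split=> [g_lip x y | g_le x y].
  by have := g_lip x y; rewrite mul1r ler_norml; lra.
by rewrite mul1r ler_norml; have := g_le x y; have := g_le y x; rewrite d_sym; lra.
Qed.

Lemma lip1_dist (c : R) (w : T) : lipschitz_with d 1 (fun z => c + d z w).
Proof. by apply/lip1P => x y; have := d_tri x y w; lra. Qed.

Lemma lip1_min (g h : T -> R) :
  lipschitz_with d 1 g -> lipschitz_with d 1 h ->
  lipschitz_with d 1 (fun z => Num.min (g z) (h z)).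
Proof.
move=> /lip1P g_le /lip1P h_le; apply/lip1P => x y.
by rewrite -lerBlDr le_min !lerBlDr !ge_min g_le h_le orbT.
Qed.

Definition mcshane (h : T -> R) (a : T) (s : seq T) (z : T) : R :=
  foldr (fun x m => Num.min (h x + d z x) m) (h a + d z a) s.

Lemma mcshane_le h a s z x : x \in a :: s -> mcshane h a s z <= h x + d z x.
Proof.
elim: s => [|b s IH]; first by rewrite inE => /eqP ->.
rewrite !inE => /or3P [/eqP xa|/eqP ->|xs] /=; rewrite ge_min ?lexx //.
  by rewrite IH ?orbT // xa mem_head.
by rewrite IH ?orbT // inE xs orbT.
Qed.

Lemma mcshane_ge h a s z c :
  {in a :: s, forall x, c <= h x + d z x} -> c <= mcshane h a s z.
Proof.
elim: s => [|b s IH] c_le /=; first by rewrite c_le ?mem_head.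
rewrite le_min c_le ?inE ?eqxx ?orbT //= IH // => x.
by rewrite inE => /predU1P [->|xs]; apply: c_le; rewrite !inE ?eqxx ?xs ?orbT.
Qed.

Lemma mcshane_lip1 h a s : lipschitz_with d 1 (mcshane h a s).
Proof.
apply/lip1P => z w; rewrite -lerBlDr; apply: mcshane_ge => x xs.
by have := mcshane_le h z xs; have := d_tri z w x; lra.
Qed.

Lemma mcshane_eq h a s :
  {in a :: s &, forall x y, h x <= h y + d x y} -> {in a :: s, mcshane h a s =1 h}.
Proof.
move=> h_le x xs; apply/le_anti; rewrite mcshane_ge ?andbT => [|y ys]; last exact: h_le.
by have := mcshane_le h x xs; rewrite d_refl addr0.
Qed.

Lemma ltp_of_short_pair (f : T -> R) (e m : R) (x y u v : T) :
  0 <= e <= 1 -> lipschitz_with d 1 f -> m <= d x y -> 2 * d u v <= e * m ->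
  (1 - e) * (`|f x - f y| + d u v) <= d x u + d y v.
Proof.
move=> /andP [e_ge0 e_le1] f_lip m_le duv_le.
have A_le : `|f x - f y| <= d x y by have := f_lip x y; rewrite mul1r.
have := d_tri x u y; have := d_tri u v y; rewrite (d_sym v y).
have : 0 <= e * d u v by apply: mulr_ge0 e_ge0 (d_ge0 u v).
have : 0 <= e * (d x y - m) by apply: mulr_ge0; lra.
have : 0 <= (1 - e) * (d x y - `|f x - f y|) by apply: mulr_ge0; lra.
lra.
Qed.

Lemma ltp_of_steep_pair (f g h : T -> R) (e delta : R) (x y u v : T) :
  0 <= e -> lipschitz_with d 1 g -> lipschitz_with d 1 h ->
  `|g x - f x| < delta -> `|g y - f y| < delta ->
  `|h x - f x| < delta -> `|h y - f y| < delta ->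
  4 * delta <= e * d u v -> (2 - e / 2) * d u v < (g u - h u) - (g v - h v) ->
  (1 - e) * (`|f x - f y| + d u v) <= d x u + d y v.
Proof.
move=> e_ge0 /lip1P g_le /lip1P h_le /ltr_normlP [gx_gt gx_lt] /ltr_normlP [gy_gt gy_lt].
move=> /ltr_normlP [hx_gt hx_lt] /ltr_normlP [hy_gt hy_lt] delta_le gh_gt.
have := g_le u v; have := h_le v u; rewrite (d_sym v u).
have := g_le u x; have := g_le y v; have := h_le x u; have := h_le v y.
rewrite (d_sym u x) (d_sym v y).
have eA : 0 <= e * `|f x - f y| by apply: mulr_ge0 e_ge0 (normr_ge0 _).
by have [A_ge0|A_lt0] := lerP 0 (f x - f y);
  [rewrite ger0_norm // in eA * | rewrite ltr0_norm // in eA *]; lra.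
Qed.

End Metric.

Section LipschitzFree.
Variables (R : realType) (T : choiceType) (d : T -> T -> R) (x0 : T).
Hypothesis d_metric : is_metric d.

Lemma lip_ball_extend_pair (h : T -> R) (s : seq T) (u v : T) (c : R) :
  h x0 = 0 -> {in x0 :: s &, forall x y, h x <= h y + d x y} ->
  `|c| <= d u v ->
  {in x0 :: s &, forall x y, `|h x - h y| + `|c| <= d x u + d y v} ->
  exists G, [/\ lip_ball d x0 G, {in x0 :: s, G =1 h} & G u - G v = c].
Proof.
move=> h0 h_le c_le h_uv.
have h_uv_signed x y : x \in x0 :: s -> y \in x0 :: s ->
    h x - h y + `|c| <= d x u + d y v /\ h y - h x + `|c| <= d x u + d y v.
  move=> xs ys; have := h_uv x y xs ys; have := distrC (h x) (h y).
  by have := ler_norm (h x - h y); have := ler_norm (h y - h x); lra.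
have c_abs : - `|c| <= c <= `|c| by rewrite -ler_norml.
pose F := mcshane d h x0 s.
have F_lip : lipschitz_with d 1 F := mcshane_lip1 d_metric h x0 s.
have /(lip1P d_metric) F_le := F_lip.
have F_eq : {in x0 :: s, F =1 h} := mcshane_eq d_metric h_le.
(* Cut F down by two cones, to the values a at u and b = a - c at v; a is the
   largest value with a <= F u and b <= F v. *)
pose a := Num.min (F u) (F v + c); pose b := a - c.
pose G1 z := Num.min (F z) (a + d z u).
pose G z := Num.min (G1 z) (b + d z v).
have G1_eq : {in x0 :: s, G1 =1 h}.
  move=> x xs; rewrite /G1 min_l ?F_eq // -lerBlDr le_min; apply/andP; split.
    by have := F_le x u; rewrite F_eq //; lra.
  suff : h x - d x u - c <= F v by lra.
  apply: mcshane_ge => y ys; rewrite (d_sym d_metric v y).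
  by have := h_uv_signed x y xs ys; lra.
have G_eq : {in x0 :: s, G =1 h}.
  move=> x xs; rewrite /G G1_eq // min_l // /b.
  suff : h x - d x v + c <= a by lra.
  rewrite le_min; apply/andP; split.
    apply: mcshane_ge => y ys; rewrite (d_sym d_metric u y).
    by have := h_uv_signed y x ys xs; lra.
  by have := F_le x v; rewrite F_eq //; lra.
have a_le : a <= F u by rewrite /a ge_min lexx.
have b_le : b <= F v.
  have : a <= F v + c by rewrite /a ge_min lexx orbT.
  rewrite /b; lra.
have Gu : G u = a.
  by rewrite /G /G1 /= d_refl // addr0 (min_r a_le) min_l // /b; lra.
have Gv : G v = b.
  rewrite /G /G1 /= d_refl // addr0 (d_sym d_metric v u) min_r // le_min b_le /=.
  by rewrite /b; lra.
exists G; split=> //; last by rewrite Gu Gv /b; ring.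
split; first by rewrite G_eq ?mem_head.
by apply: lip1_min => //; [apply: lip1_min => // | ]; apply: lip1_dist.
Qed.

Lemma lipschitz_withB (L1 L2 : R) (f g : T -> R) :
  lipschitz_with d L1 f -> lipschitz_with d L2 g -> lipschitz_with d (L1 + L2) (f \- g).
Proof.
move=> f_lip g_lip x y; rewrite mulrDl /=.
have -> : f x - g x - (f y - g y) = (f x - f y) - (g x - g y) by ring.
by apply: le_trans (ler_normB _ _) _; apply: lerD.
Qed.

Lemma lipnorm_le (L : R) (f : T -> R) :
  0 <= L -> lipschitz_with d L f -> lipnorm d f <= L.
Proof.
move=> L_ge0 f_lip; apply: ge0_ge_sup => // _ [x [y [xy ->]]].
by rewrite ler_pdivrMr ?f_lip ?d_gt0.
Qed.

Lemma lipnorm_ge (L : R) (f : T -> R) (x y : T) :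
  lipschitz_with d L f -> x <> y -> `|f x - f y| / d x y <= lipnorm d f.
Proof.
move=> f_lip xy; apply: ub_le_sup; last by exists x, y.
by exists L => _ [x' [y' [xy' ->]]]; rewrite ler_pdivrMr ?f_lip ?d_gt0.
Qed.

Lemma lipnorm_gt (r : R) (f : T -> R) :
  0 <= r -> r < lipnorm d f -> exists x y, x <> y /\ r < `|f x - f y| / d x y.
Proof.
move=> r_ge0; rewrite /lipnorm; set S := [set _ | _].
have [->|/set0P S_neq0] := eqVneq S set0.
  by rewrite sup0 => /(le_lt_trans r_ge0); rewrite ltxx.
by move=> /(sup_gt S_neq0) [_ [x [y [xy ->]]] r_lt]; exists x, y.
Qed.

Lemma lipnorm_subr_le2 (g h : T -> R) :
  lip_ball d x0 g -> lip_ball d x0 h -> lipnorm d (g \- h) <= 2.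
Proof.
move=> [_ g_lip] [_ h_lip]; apply: lipnorm_le => //.
by have := lipschitz_withB g_lip h_lip; rewrite (_ : 1 + 1 = 2).
Qed.

Lemma lip_diam_le2 (V : set (T -> R)) : V `<=` lip_ball d x0 -> lip_diam d V <= 2.
Proof.
move=> V_ball; apply: ge0_ge_sup => // _ [g [h [Vg [Vh ->]]]].
exact: lipnorm_subr_le2 (V_ball _ Vg) (V_ball _ Vh).
Qed.

Lemma lip_diam_ge (V : set (T -> R)) (g h : T -> R) :
  V `<=` lip_ball d x0 -> V g -> V h -> lipnorm d (g \- h) <= lip_diam d V.
Proof.
move=> V_ball Vg Vh; apply: ub_le_sup; last by exists g, h.
exists 2 => _ [g' [h' [Vg' [Vh' ->]]]].
exact: lipnorm_subr_le2 (V_ball _ Vg') (V_ball _ Vh').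
Qed.

Lemma lip_diam_gt (V : set (T -> R)) (r : R) :
  V !=set0 -> r < lip_diam d V -> exists g h, [/\ V g, V h & r < lipnorm d (g \- h)].
Proof.
move=> [f Vf] /sup_gt [|_ [g [h [Vg [Vh ->]]]] r_lt]; last by exists g, h.
by exists (lipnorm d (f \- f)), f, f.
Qed.

Lemma molecule_eval_scale (c : seq (R * T)) (f g : T -> R) (k : R) :
  {in [seq p.2 | p <- c], forall x, g x = k * f x} ->
  molecule_eval c g = k * molecule_eval c f.
Proof.
move=> g_eq; rewrite /molecule_eval mulr_sumr big_seq [RHS]big_seq.
by apply: eq_bigr => p pc; rewrite g_eq ?map_f // mulrCA.
Qed.

Lemma in_free_eval (x : T) : in_free d x0 (fun f => f x).
Proof.
move=> eps eps_gt0; exists [:: (1, x)] => L f L_ge0 _ _.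
rewrite /molecule_eval big_seq1 mul1r subrr normr0.
exact: mulr_ge0 (ltW eps_gt0) L_ge0.
Qed.

Lemma wstar_rel_open_near (s : seq T) (f : T -> R) (delta : R) :
  wstar_rel_open d x0 [set g | lip_ball d x0 g /\ {in s, forall x, `|g x - f x| < delta}].
Proof.
split=> [g [] //|g [g_ball g_near]].
have [|r r_gt0 r_le] := seq_pos_lb (l := [seq delta - `|g x - f x| | x <- s]).
  by move=> _ /mapP [x xs ->]; rewrite subr_gt0 g_near.
exists (size s), (fun i h => h (nth x0 s i)), r; split=> //; split=> [i|h h_ball h_near].
  exact: in_free_eval.
split=> // x xs; have xi : (index x s < size s)%N by rewrite index_mem.
have := h_near (Ordinal xi); rewrite /= nth_index // => hg_lt.
have := r_le _ (map_f (fun x => delta - `|g x - f x|) xs).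
have -> : h x - f x = (h x - g x) + (g x - f x) by ring.
by have := ler_normD (h x - g x) (g x - f x); lra.
Qed.

Lemma wstar_nbhd_scaled (V : set (T -> R)) (f : T -> R) :
  wstar_rel_open d x0 V -> V f ->
  exists s : seq T, exists2 e0, 0 < e0 & forall (e : R) (g : T -> R),
    0 <= e <= e0 -> lip_ball d x0 g -> {in s, forall x, g x = (1 - e) * f x} -> V g.
Proof.
move=> [V_ball V_open] Vf; have [f0 f_lip] := V_ball f Vf.
have [n [phi [eps [eps_gt0 [phi_free V_nbhd]]]]] := V_open f Vf.
have /choice [c c_approx] : forall i, exists c : seq (R * T),
    forall (L : R) (g : T -> R), 0 <= L -> lipschitz_with d L g -> g x0 = 0 ->
      `|phi i g - molecule_eval c g| <= eps / 3 * L.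
  by move=> i; apply: phi_free; rewrite divr_gt0.
(* A g agreeing with (1 - e) f on the supports of the molecules c i moves each
   of them by e * M i, so e0 only has to make e * `|M i| small. *)
pose M i := molecule_eval (c i) f.
have [|e0 e0_gt0 e0_le] := seq_pos_lb (l := [seq eps / 3 / (`|M i| + 1) | i <- enum 'I_n]).
  move=> _ /mapP [i _ ->]; rewrite !divr_gt0 //.
  exact: ltr_wpDl (normr_ge0 _) ltr01.
exists (flatten [seq [seq p.2 | p <- c i] | i <- enum 'I_n]), e0 => // e g.
move=> /andP [e_ge0 e_le] [g0 g_lip] g_eq; apply: V_nbhd => // i.
have Mg : molecule_eval (c i) g = (1 - e) * M i.
  apply: molecule_eval_scale => x xc; apply: g_eq.
  by apply/flatten_mapP; exists i; rewrite ?mem_enum.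
have eM : `|e * M i| < eps / 3.
  have := e0_le _ (map_f (fun i => eps / 3 / (`|M i| + 1)) (mem_enum _ i)).
  rewrite ler_pdivlMr; last exact: ltr_wpDl (normr_ge0 _) ltr01.
  rewrite normrM ger0_norm // => e0M.
  have := ler_wpM2r (normr_ge0 (M i)) e_le; lra.
have := c_approx i 1 g ler01 g_lip g0; have := c_approx i 1 f ler01 f_lip f0.
rewrite Mg -/(M i) mulr1 !ler_norml ltr_norml; move: eM; rewrite ltr_norml; lra.
Qed.

Lemma ltp_scaled_pair (f : T -> R) (s : seq T) (e : R) :
  Lip_LTP d x0 -> lip_ball d x0 f -> 0 < e <= 1 ->
  exists g h, [/\ lip_ball d x0 g, lip_ball d x0 h,
    {in s, forall x, g x = (1 - e) * f x}, {in s, forall x, h x = (1 - e) * f x}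
    & 2 * (1 - e) <= lipnorm d (g \- h)].
Proof.
move=> LTP [f0 f_lip] /andP [e_gt0 e_le1].
have [u [v [uv ltp]]] := LTP [set` x0 :: s] e f (finite_seq _) e_gt0 (conj f0 f_lip).
have d_uv := d_gt0 d_metric uv.
pose h z := (1 - e) * f z; pose c := (1 - e) * d u v.
have h0 : h x0 = 0 by rewrite /h f0 mulr0.
have h_le : {in x0 :: s &, forall x y, h x <= h y + d x y}.
  move=> x y _ _; have /(lip1P d_metric)/(_ x y) f_le := f_lip.
  have : 0 <= e * d x y by apply: mulr_ge0 (ltW e_gt0) (d_ge0 d_metric x y).
  have : 0 <= (1 - e) * (f y + d x y - f x) by apply: mulr_ge0; rewrite subr_ge0.
  rewrite /h; lra.
have c_ge0 : 0 <= c by apply: mulr_ge0; [rewrite subr_ge0 | exact: ltW].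
have c_le : `|c| <= d u v.
  have : 0 <= e * d u v by apply: mulr_ge0 (ltW e_gt0) (ltW d_uv).
  rewrite (ger0_norm c_ge0) /c; lra.
have h_uv : {in x0 :: s &, forall x y, `|h x - h y| + `|c| <= d x u + d y v}.
  move=> x y xs ys; rewrite /h -mulrBr normrM (ger0_norm c_ge0) ger0_norm ?subr_ge0 //.
  by rewrite /c -mulrDr; apply: ltp.
have [g [[g0 g_lip] g_eq guv]] := lip_ball_extend_pair h0 h_le c_le h_uv.
have Nc_le : `|- c| <= d u v by rewrite normrN.
have h_uv_neg : {in x0 :: s &, forall x y, `|h x - h y| + `|- c| <= d x u + d y v}.
  by move=> x y xs ys; rewrite normrN h_uv.
have [g' [[g'0 g'_lip] g'_eq g'uv]] := lip_ball_extend_pair h0 h_le Nc_le h_uv_neg.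
have s_sub : {subset s <= x0 :: s} by move=> x xs; rewrite inE xs orbT.
exists g, g'; split=> // [x xs|x xs|]; rewrite ?g_eq ?g'_eq ?s_sub //.
have := lipnorm_ge (lipschitz_withB g_lip g'_lip) uv; apply: le_trans.
have -> : g u - g' u - (g v - g' v) = 2 * c by move: guv g'uv; lra.
by rewrite normrM ger0_norm // ger0_norm // /c mulrA mulfK ?gt_eqF.
Qed.

Lemma ltp_of_near_pair (f g h : T -> R) (s : seq T) (e m delta : R) (u v : T) :
  0 < e <= 1 -> {in s &, forall x y, x != y -> m <= d x y} ->
  8 * delta <= e * (e * m) ->
  lipschitz_with d 1 f -> lipschitz_with d 1 g -> lipschitz_with d 1 h ->
  {in s, forall x, `|g x - f x| < delta} -> {in s, forall x, `|h x - f x| < delta} ->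
  (2 - e / 2) * d u v < `|(g u - h u) - (g v - h v)| ->
  {in s &, forall x y, (1 - e) * (`|f x - f y| + d u v) <= d x u + d y v}.
Proof.
move=> /andP [e_gt0 e_le1] m_sep delta_le f_lip.
wlog gh_gt : g h / (2 - e / 2) * d u v < (g u - h u) - (g v - h v).
  move=> wlog_gh g_lip h_lip g_near h_near gh_abs.
  move: (gh_abs); rewrite ltr_normr => /orP [gh_gt|hg_gt]; first exact: (wlog_gh g h).
  have {}hg_gt : (2 - e / 2) * d u v < (h u - g u) - (h v - g v) by lra.
  exact: (wlog_gh h g hg_gt) (lt_le_trans hg_gt (ler_norm _)).
move=> g_lip h_lip g_near h_near _ x y xs ys.
have [steep|short] := lerP (e * m / 2) (d u v).
  apply: (ltp_of_steep_pair d_metric (delta := delta) (ltW e_gt0) g_lip h_lip) gh_gt;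
    rewrite ?g_near ?h_near //.
  by have := ler_wpM2l (ltW e_gt0) steep; lra.
have [<-|xy] := eqVneq x y.
  have : 0 <= e * d u v by apply: mulr_ge0 (ltW e_gt0) (d_ge0 d_metric u v).
  by rewrite subrr normr0 add0r; have := d_tri d_metric u x v; rewrite (d_sym d_metric u x); lra.
have e_range : 0 <= e <= 1 by rewrite (ltW e_gt0) e_le1.
by apply: (ltp_of_short_pair d_metric e_range f_lip (m_sep x y xs ys xy)); lra.
Qed.

Lemma Lip_LTP_wstar_D2P : Lip_LTP d x0 -> wstar_D2P d x0.
Proof.
move=> LTP V V_open [f Vf]; have [V_ball _] := V_open.
have [s [e0 e0_gt0 V_scaled]] := wstar_nbhd_scaled V_open Vf.
apply/le_anti; rewrite lip_diam_le2 //=; apply/ler_addgt0Pr => eta eta_gt0.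
pose e := Num.min e0 (Num.min (eta / 2) 1).
have e_gt0 : 0 < e by rewrite !lt_min e0_gt0 ltr01 andbT; lra.
have [e_le0 e_le e_le1] : [/\ e <= e0, e <= eta / 2 & e <= 1].
  by split; rewrite !ge_min ?lexx ?orbT.
have e_range : 0 < e <= 1 by rewrite e_gt0 e_le1.
have e_small : 0 <= e <= e0 by rewrite (ltW e_gt0) e_le0.
have [g [h [g_ball h_ball g_eq h_eq gh_ge]]] := ltp_scaled_pair s LTP (V_ball f Vf) e_range.
have := lip_diam_ge V_ball (V_scaled e g e_small g_ball g_eq) (V_scaled e h e_small h_ball h_eq).
lra.
Qed.

Lemma wstar_D2P_Lip_LTP : wstar_D2P d x0 -> Lip_LTP d x0.
Proof.
move=> D2P N eps f /finite_seqP [s ->] eps_gt0 [f0 f_lip].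
pose e := Num.min eps 1.
have e_range : 0 < e <= 1 by rewrite lt_min eps_gt0 ltr01 ge_min lexx orbT.
have e_le : e <= eps by rewrite ge_min lexx.
have [m m_gt0 m_sep] := finite_separation d_metric s.
pose delta := e * (e * m) / 8.
pose V := [set g | lip_ball d x0 g /\ {in s, forall x, `|g x - f x| < delta}].
have Vf : V f.
  split=> // x _; rewrite subrr normr0 /delta.
  by rewrite !divr_gt0 ?mulr_gt0 //; case/andP: e_range.
have [|g [h [[[_ g_lip] g_near] [[_ h_lip] h_near] gh_gt]]] :=
    lip_diam_gt (ex_intro _ f Vf) (r := 2 - e / 2).
  by rewrite (D2P V (wstar_rel_open_near s f delta) (ex_intro _ f Vf)); case/andP: e_range => *; lra.
have [|u [v [uv uv_gt]]] := lipnorm_gt _ gh_gt; first by case/andP: e_range => *; lra.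
exists u, v; split=> // x y xs ys.
rewrite ltr_pdivlMr ?d_gt0 //= in uv_gt.
have delta_le : 8 * delta <= e * (e * m) by rewrite /delta; lra.
have X_ge0 : 0 <= `|f x - f y| + d u v by rewrite addr_ge0 ?d_ge0.
apply: le_trans (ler_wpM2r X_ge0 (lerB (lexx 1) e_le)) _.
exact: ltp_of_near_pair e_range m_sep delta_le f_lip g_lip h_lip g_near h_near uv_gt x y xs ys.
Qed.

End LipschitzFree.

Theorem proposition4p2 (R : realType) (T : Type) (d : T -> T -> R) (x0 : T) :
  is_metric d -> (wstar_D2P d x0 <-> Lip_LTP d x0).
Proof.
elim/Pchoice: T => T in d x0 *.
by move=> d_metric; split; [exact: wstar_D2P_Lip_LTP | exact: Lip_LTP_wstar_D2P].
Qed.
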